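(* Let $n>2$. Then the following statement is false: ''for every $A\in\mathrm{Hull}(\Lambda_2(3,n))$ we have $\operatorname{Per}(A)\ge(n!/n^n)^{2}$, with equality if and only if $A=n^{-2}J_n^3$.'' That is, there exists $A\in\mathrm{Hull}(\Lambda_2(3,n))$ such that either $\operatorname{Per}(A)<(n!/n^n)^2$, or $\operatorname{Per}(A)=(n!/n^n)^2$ and $A\neq n^{-2}J_n^3$.
   Context: Let $I_n=\{1,\dots,n\}$. A $3$-dimensional matrix of order $n$ is a function $I_n^3\to\mathbb R$. A $2$-plane is the set of positions with one coordinate fixed. $\Lambda_2(3,n)$ is the set of $(0,1)$-valued $3$-dimensional matrices of order $n$ with exactly one $1$ in each $2$-plane. $\mathrm{Hull}(X)$ denotes the convex hull of $X$. A diagonal is a selection of $n$ positions any two of which differ in every coordinate; $\operatorname{Per}(A)$ is the sum over diagonals of the product of the entries on the diagonal. $J_n^3$ is the $3$-dimensional matrix of order $n$ with all entries $1$. *)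

From HB Require Import structures.
From mathcomp Require Import all_boot all_order all_algebra.
Set Implicit Arguments. Unset Strict Implicit. Unset Printing Implicit Defensive.
Import Order.TTheory GRing.Theory Num.Theory.
Local Open Scope ring_scope.

Definition pos (n : nat) := ('I_n * 'I_n * 'I_n)%type.

Definition coord (n : nat) (k : 'I_3) (p : pos n) : 'I_n :=
  match val k with 0%N => p.1.1 | 1%N => p.1.2 | _ => p.2 end.

Notation mat3 R n := {ffun pos n -> R}.

Definition plane (n : nat) (k : 'I_3) (v : 'I_n) : {set pos n} :=
  [set p | coord k p == v].

Definition Lambda2 (R : nzRingType) (n : nat) (A : mat3 R n) : Prop :=
  (forall p, A p = 0 \/ A p = 1) /\
  (forall (k : 'I_3) (v : 'I_n), #|[set p in plane k v | A p == 1]| = 1%N).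

Definition Hull (R : realFieldType) (n : nat) (X : mat3 R n -> Prop)
  (A : mat3 R n) : Prop :=
  exists (m : nat) (c : 'I_m -> R) (L : 'I_m -> mat3 R n),
    (forall k, X (L k)) /\ (forall k, 0 <= c k) /\
    \sum_(k < m) c k = 1 /\ A = [ffun p => \sum_(k < m) c k * L k p].

Definition diagonal (n : nat) (D : {set pos n}) : bool :=
  (#|D| == n) && [forall p in D, forall q in D, (p != q) ==> [forall k : 'I_3, coord k p != coord k q]].

Definition Per (R : realFieldType) (n : nat) (A : mat3 R n) : R :=
  \sum_(D : {set pos n} | diagonal D) \prod_(p in D) A p.

Definition constmat (R : Type) (n : nat) (a : R) : mat3 R n := [ffun _ => a].

From Pilot Require Import Defs.
From HB Require Import structures.
From mathcomp Require Import all_boot all_order all_algebra all_fingroup.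
From mathcomp Require Import ring lra.
Import Order.TTheory GRing.Theory Num.Theory.
Local Open Scope ring_scope.
Set Implicit Arguments. Unset Strict Implicit. Unset Printing Implicit Defensive.

(* For n = m + 3 put chi x = [x = 0] - [x = 1] and A_e = n^-2 J + e chi(x) chi(y) chi(z).
   Averaging the diagonals {(i, s i + a, t i + c)} over all shifts a, c gives n^-2 J, and
   chi(x) chi(y) chi(z) is a signed combination of eight diagonals, so A_e lies in the hull
   for small |e|.  A diagonal {(i, s i, t i)} meets the support of chi(x) chi(y) chi(z) only at
   i = 0, 1, so its contribution to Per A_e + Per A_-e is 2 n^-2n + 2 e^2 n^(-2(n-2)) b0 b1
   with b_k = chi(k) chi(s k) chi(t k).  Here b0 b1 <= 0 because s and t are injective, and
   b0 b1 < 0 for s = 1, t = (0 1).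
   Summing over the (n!)^2 pairs (s, t) gives Per A_e + Per A_-e < 2 (n!/n^n)^2. *)

Section Diagonals.
Variable n : nat.
Implicit Types (s t : {perm 'I_n}) (D : {set pos n}).

Definition diagset s t : {set pos n} := [set (i, s i, t i) | i : 'I_n].

Lemma mem_diagset s t (p : pos n) :
  (p \in diagset s t) = (p.1.2 == s p.1.1) && (p.2 == t p.1.1).
Proof.
case: p => [[x y] z] /=.
by apply/imsetP/andP => [[i _ [-> -> ->]] | [/eqP -> /eqP ->]]; last exists x.
Qed.

Lemma diag_inj s t : injective (fun i : 'I_n => (i, s i, t i)).
Proof. by move=> i j [->]. Qed.

Lemma diagset_inj : injective (fun st : {perm 'I_n} * {perm 'I_n} => diagset st.1 st.2).
Proof.
move=> [s t] [s' t'] /= /setP eqD; congr (_, _); apply/permP => i.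
- by have := eqD (i, s i, t i); rewrite !mem_diagset /= !eqxx => /esym/andP[/eqP].
- by have := eqD (i, s i, t i); rewrite !mem_diagset /= !eqxx => /esym/andP[_ /eqP].
Qed.

Lemma diagonal_diagset s t : diagonal (diagset s t).
Proof.
apply/andP; split; first by rewrite card_imset ?card_ord //; apply: diag_inj.
apply/forall_inP => _ /imsetP [i _ ->]; apply/forall_inP => _ /imsetP [j _ ->].
apply/implyP => neq; have nij : i != j by apply: contra neq => /eqP ->.
apply/forallP => -[[|[|[|k]]] lt_k3] //=; rewrite /Defs.coord //=.
- by rewrite (inj_eq perm_inj).
- by rewrite (inj_eq perm_inj).
Qed.

Lemma diagonal_diagsetP D : diagonal D -> exists s t, D = diagset s t.
Proof.
move=> /andP [/eqP cardD /forall_inP diagD].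
have coordD p q k : p \in D -> q \in D -> Defs.coord k p = Defs.coord k q -> p = q.
  move=> pD qD eq_pq; apply/eqP; apply: contraT => neq_pq.
  move: (diagD p pD) => /forall_inP /(_ q qD) /implyP /(_ neq_pq) /forallP /(_ k).
  by rewrite eq_pq eqxx.
have inj1 : {in D &, injective (fun p : pos n => p.1.1)}.
  by move=> p q pD qD; apply: (coordD _ _ ord0).
have onto1 i : exists p, (p \in D) && (p.1.1 == i).
  have : i \in [set p.1.1 | p in D].
    suff -> : [set p.1.1 | p in D] = setT by rewrite inE.
    by apply/eqP; rewrite eqEcard subsetT card_in_imset // cardsT card_ord cardD leqnn.
  by case/imsetP => p pD ->; exists p; rewrite pD eqxx.
have [F /all_and2 [FD F1]] : exists F : 'I_n -> pos n, forall i, F i \in D /\ (F i).1.1 = i.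
  by have [F HF] := fin_all_exists onto1; exists F => i; case/andP: (HF i) => -> /eqP.
have injF k : injective (fun i => Defs.coord k (F i)).
  move=> i j eqij; have := coordD _ _ _ (FD i) (FD j) eqij.
  by move=> /(congr1 (fun p : pos n => p.1.1)); rewrite !F1.
exists (perm (injF (Ordinal (isT : 1 < 3)%N))), (perm (injF (Ordinal (isT : 2 < 3)%N))).
apply/setP => -[[x y] z]; rewrite mem_diagset !permE /Defs.coord /=.
apply/idP/andP => [xyzD | [/eqP -> /eqP ->]].
  by have := inj1 _ _ xyzD (FD x); rewrite F1 => /(_ erefl) <-.
by have := FD x; move: (F1 x); case: (F x) => [[? ?] ?] /= ->.
Qed.

Lemma Per_perm (R : realFieldType) (A : mat3 R n) :
  Per A = \sum_(s : {perm 'I_n}) \sum_(t : {perm 'I_n}) \prod_i A (i, s i, t i).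
Proof.
rewrite /Per (eq_bigl (mem (imset (fun st => diagset st.1 st.2) (mem setT)))).
  rewrite big_imset /=; last by move=> ? ? _ _; apply: diagset_inj.
  rewrite pair_big_dep /=; apply: eq_big => [[s t]|[s t] _]; first by rewrite inE.
  by rewrite big_imset //= => i j _ _; apply: diag_inj.
move=> D; apply/idP/imsetP => [/diagonal_diagsetP [s [t ->]] | [[s t] _ ->]].
  by exists (s, t).
exact: diagonal_diagset.
Qed.

End Diagonals.

Definition diagmat (R : nzRingType) n (s t : {perm 'I_n}) : mat3 R n :=
  [ffun p => (p \in diagset s t)%:R].

Lemma diagmatE (R : nzRingType) n (s t : {perm 'I_n}) (p : pos n) :
  diagmat R s t p = (p.1.2 == s p.1.1)%:R * (p.2 == t p.1.1)%:R.
Proof. by rewrite ffunE mem_diagset -mulnb natrM. Qed.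

Lemma Lambda2_diagmat (R : nzRingType) n (s t : {perm 'I_n}) : Lambda2 (diagmat R s t).
Proof.
split=> [p | k v]; first by rewrite ffunE; case: (_ \in _); [right | left].
have eq1 p : (diagmat R s t p == 1) = (p \in diagset s t).
  by rewrite ffunE; case: (_ \in _); rewrite ?eqxx // eq_sym oner_eq0.
have card_plane (f : 'I_n -> 'I_n) (g := fun i => Defs.coord k (i, s i, t i)) :
    cancel f g -> cancel g f -> #|[set p in plane k v | diagmat R s t p == 1]| = 1%N.
  move=> fK gK; rewrite -(cards1 (f v, s (f v), t (f v))); apply: eq_card => p.
  rewrite !inE eq1; apply/andP/eqP => [[/eqP <- /imsetP [i _ ->]] | ->].
    by rewrite gK.
  by move: (fK v); rewrite /g /= => ->; rewrite eqxx imset_f.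
move: card_plane; case: k => [[|[|[|k]]] lt_k3] // card_plane.
- exact: (card_plane id).
- by apply: (card_plane (s^-1)%g) => i; rewrite /Defs.coord /= ?permK ?permKV.
- by apply: (card_plane (t^-1)%g) => i; rewrite /Defs.coord /= ?permK ?permKV.
Qed.

Lemma hull_comb (R : realFieldType) n (X : mat3 R n -> Prop) (I : finType)
    (c : I -> R) (L : I -> mat3 R n) :
  (forall k, X (L k)) -> (forall k, 0 <= c k) -> \sum_k c k = 1 ->
  Hull X [ffun p => \sum_k c k * L k p].
Proof.
move=> XL c_ge0 sum_c; exists #|I|, (c \o enum_val), (L \o enum_val).
split; [by move=> k; apply: XL | split; [by move=> k; apply: c_ge0 | split]].
  by rewrite -(big_enum_val (A := I)).
by apply/ffunP => p; rewrite !ffunE -(big_enum_val (A := I) (fun k => c k * L k p)).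
Qed.

Lemma ltr_sum_ex (R : numDomainType) (I : finType) (F G : I -> R) (i : I) :
  (forall j, F j <= G j) -> F i < G i -> \sum_j F j < \sum_j G j.
Proof.
move=> leFG ltFGi; rewrite (bigD1 i) // [X in _ < X](bigD1 i) //=.
by apply: ltr_leD => //; apply: ler_sum.
Qed.

Lemma sum_indicator_add (R : nzSemiRingType) (V : finZmodType) (x y : V) :
  \sum_(a : V) (y == x + a)%:R = 1 :> R.
Proof.
rewrite (bigD1 (y - x)) //= [x + _]addrC subrK eqxx big1 ?addr0 // => a.
by move=> ne; case: eqP => // y_xa; rewrite y_xa [x + a]addrC addrK eqxx in ne.
Qed.

Lemma sum_pair (R : nmodType) (I J : finType) (F : I * J -> R) :
  \sum_k F k = \sum_i \sum_j F (i, j).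
Proof. by rewrite pair_bigA; apply: eq_bigr => -[]. Qed.

Definition shift n (a : 'I_n.+1) : {perm 'I_n.+1} := perm (addIr a).

Lemma shiftE n (a x : 'I_n.+1) : shift a x = x + a.
Proof. by rewrite permE. Qed.

Lemma shift0 n : shift (0 : 'I_n.+1) = 1%g.
Proof. by apply/permP => x; rewrite shiftE perm1 addr0. Qed.

Lemma sum_diagmat_shift (R : nzRingType) n (s t : {perm 'I_n.+1}) (p : pos n.+1) :
  \sum_a \sum_c diagmat R (s * shift a) (t * shift c) p = 1.
Proof.
under eq_bigr do under eq_bigr do rewrite diagmatE !permM !shiftE.
by rewrite -big_distrlr /= !sum_indicator_add mulr1.
Qed.

Section Perturbation.
Variables (R : realFieldType) (m : nat).
Local Notation N := m.+3.

Let i0 : 'I_N := Ordinal (isT : (0 < N)%N).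
Let i1 : 'I_N := Ordinal (isT : (1 < N)%N).
Let i2 : 'I_N := Ordinal (isT : (2 < N)%N).

Definition chi (x : 'I_N) : R := (x == i0)%:R - (x == i1)%:R.
Definition chi3 (p : pos N) : R := chi p.1.1 * chi p.1.2 * chi p.2.

Lemma chi_out x : x != i0 -> x != i1 -> chi x = 0.
Proof. by rewrite /chi => /negbTE -> /negbTE ->; rewrite subrr. Qed.

Lemma chi_mul_le0 x y : x != y -> chi x * chi y <= 0.
Proof.
move=> neq; rewrite /chi.
case: (x =P i0) => x0; case: (x =P i1) => x1; case: (y =P i0) => y0; case: (y =P i1) => y1;
  rewrite /= ?subr0 ?sub0r ?subrr ?mulr0 ?mul0r ?mulrNN ?mulr1 ?mul1r ?mulrN1 ?mulN1r //=
          ?lerN10 //.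
all: by move: neq; rewrite ?x0 ?x1 ?y0 ?y1 eqxx.
Qed.

Definition sigma (b : bool) : {perm 'I_N} := if b then tperm i0 i1 else 1%g.

(* [tau j] maps (i0, i1) to (i0, i2), (i1, i2), (i2, i0), (i2, i1): weighted by (-1)^j,
   the i2 terms cancel in [sum_tau]. *)
Definition tau (j : 'I_4) : {perm 'I_N} :=
  match val j with
  | 0 => tperm i1 i2
  | 1 => tperm i1 i2 * tperm i0 i1
  | 2 => tperm i0 i1 * tperm i1 i2
  | _ => tperm i0 i2
  end.

Lemma sum_sigma x y : \sum_(b : bool) (-1) ^+ b * (y == sigma b x)%:R = chi x * chi y.
Proof.
rewrite big_bool /= perm1 mul1r mulN1r /chi.
case: tpermP => [-> | -> | /eqP/negbTE x0 /eqP/negbTE x1]; rewrite ?eqxx //=.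
- by rewrite subr0 mul1r addrC.
- by rewrite sub0r mulN1r opprB addrC.
- by rewrite addNr x0 x1 subrr mul0r.
Qed.

Lemma sum_tau x z : (x == i0) || (x == i1) ->
  \sum_(j < 4) (-1) ^+ j * (z == tau j x)%:R = chi z.
Proof.
rewrite !big_ord_recl big_ord0 /= /tau /chi /= !permM.
by case/orP => /eqP ->; rewrite !permE /=; ring.
Qed.

Lemma chi3_decomp p :
  chi3 p = \sum_(b : bool) \sum_(j < 4) (-1) ^+ b * (-1) ^+ j * diagmat R (sigma b) (tau j) p.
Proof.
case: p => [[x y] z]; rewrite /chi3 /=.
under eq_bigr do under eq_bigr do rewrite diagmatE /= mulrACA.
rewrite -big_distrlr /= sum_sigma.
have [x01 | x01] := boolP ((x == i0) || (x == i1)); first by rewrite sum_tau.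
by rewrite negb_or in x01; case/andP: x01 => x0 x1; rewrite chi_out // !mul0r.
Qed.

Definition unif : R := (N%:R ^+ 2)^-1.

Definition pert (e : R) : mat3 R N := [ffun p => unif + e * chi3 p].

Lemma unif_gt0 : 0 < unif.
Proof. by rewrite invr_gt0 exprn_gt0 // ltr0n. Qed.

Let Idx := ((bool * 'I_4) * ('I_N * 'I_N))%type.

Let vertex (k : Idx) : mat3 R N := diagmat R (sigma k.1.1 * shift k.2.1) (tau k.1.2 * shift k.2.2).

(* [unif / 8] on each of the 8 N^2 shifted vertices averages to [unif]; the unshifted
   vertices also carry [e] times the coefficients of [chi3_decomp]. *)
Let weight (e : R) (k : Idx) : R := unif / 8 + (e * ((-1) ^+ k.1.1 * (-1) ^+ k.1.2)) *+ (k.2 == 0).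

Lemma pert_comb e : pert e = [ffun p => \sum_k weight e k * vertex k p].
Proof.
apply/ffunP => p; rewrite !ffunE; under eq_bigr do rewrite mulrDl.
rewrite big_split /= -mulr_sumr sum_pair; congr (_ + _).
  under eq_bigr do rewrite sum_pair /vertex /= sum_diagmat_shift.
  by rewrite sumr_const card_prod card_bool card_ord divfK // pnatr_eq0.
rewrite chi3_decomp mulr_sumr 2!sum_pair; apply: eq_bigr => b _.
rewrite mulr_sumr; apply: eq_bigr => j _.
rewrite (bigD1 (0 : 'I_N * 'I_N)) //= big1 ?addr0 => [|ac /negbTE ->]; last by rewrite mul0r.
by rewrite /vertex /= shift0 !mulg1 mulr1n mulrA.
Qed.

Lemma hull_pert e : `|e| <= unif / 8 -> Hull (@Lambda2 R N) (pert e).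
Proof.
move=> le_e_u; rewrite pert_comb; apply: hull_comb => [k | [[b j] ac] | ].
- exact: Lambda2_diagmat.
- have u8_ge0 : 0 <= unif / 8 by rewrite divr_ge0 ?ltW ?unif_gt0.
  rewrite /weight /=; case: (ac == 0); rewrite ?mulr0n ?addr0 ?mulr1n //.
  have : `|e * ((-1) ^+ b * (-1) ^+ j)| <= unif / 8 by rewrite !normrM !normr_sign !mulr1.
  by rewrite ler_norml => /andP [lo _]; lra.
rewrite big_split /= sumr_const !card_prod card_bool !card_ord 2!sum_pair.
have sum_sign (I : finType) (F : I -> R) : \sum_(c : bool) \sum_i (-1) ^+ c * F i = 0.
  by rewrite big_bool -!mulr_sumr /= expr0 mulN1r mul1r addNr.
rewrite (eq_bigr (fun b : bool => \sum_(j < 4) e * ((-1) ^+ b * (-1) ^+ j))); last first.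
  move=> b _; apply: eq_bigr => j _.
  by rewrite (bigD1 (0 : 'I_N * 'I_N)) //= big1 ?addr0 // => ac /negbTE ->.
under eq_bigr do under eq_bigr do rewrite mulrCA.
rewrite sum_sign addr0 -[_ *+ _]mulr_natr !natrM /unif.
by field; rewrite -natrD pnatr_eq0.
Qed.

Let pert_prod e (s t : {perm 'I_N}) : R := \prod_i pert e (i, s i, t i).

Let unif_rest : R := \prod_(i | (i != i0) && (i != i1)) unif.

Lemma pert_prod_split e (s t : {perm 'I_N}) :
  pert_prod e s t =
  (unif + e * chi3 (i0, s i0, t i0)) * (unif + e * chi3 (i1, s i1, t i1)) * unif_rest.
Proof.
rewrite /pert_prod (bigD1 i0) // (bigD1 i1) //= !ffunE mulrA; congr (_ * _).
by apply: eq_bigr => i /andP [i_0 i_1]; rewrite ffunE /chi3 /= chi_out // !mul0r mulr0 addr0.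
Qed.

Lemma pert_prod_sym e (s t : {perm 'I_N}) :
  pert_prod e s t + pert_prod (- e) s t =
  2 * unif ^+ N + 2 * e ^+ 2 * (chi3 (i0, s i0, t i0) * chi3 (i1, s i1, t i1)) * unif_rest.
Proof.
have uN : unif ^+ N = unif * unif * unif_rest.
  have := pert_prod_split 0 s t; rewrite /pert_prod; under eq_bigr do rewrite ffunE mul0r addr0.
  by rewrite prodr_const card_ord !mul0r !addr0.
by rewrite !pert_prod_split uN; ring.
Qed.

Lemma chi3_pair_le0 (s t : {perm 'I_N}) : chi3 (i0, s i0, t i0) * chi3 (i1, s i1, t i1) <= 0.
Proof.
have svs : chi (s i0) * chi (s i1) <= 0 by apply: chi_mul_le0; rewrite (inj_eq perm_inj).
have svt : chi (t i0) * chi (t i1) <= 0 by apply: chi_mul_le0; rewrite (inj_eq perm_inj).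
have -> : chi3 (i0, s i0, t i0) * chi3 (i1, s i1, t i1) =
          - ((chi (s i0) * chi (s i1)) * (chi (t i0) * chi (t i1))).
  by rewrite /chi3 /chi /=; ring.
by rewrite oppr_le0 mulr_le0.
Qed.

Lemma unif_rest_gt0 : 0 < unif_rest.
Proof. by apply: prodr_gt0 => i _; apply: unif_gt0. Qed.

Lemma pert_prod_sym_le e (s t : {perm 'I_N}) :
  pert_prod e s t + pert_prod (- e) s t <= 2 * unif ^+ N.
Proof.
rewrite pert_prod_sym gerDl; apply: mulr_le0_ge0; last exact/ltW/unif_rest_gt0.
by apply: mulr_ge0_le0; [rewrite mulr_ge0 ?sqr_ge0 | apply: chi3_pair_le0].
Qed.

Lemma pert_prod_sym_lt e : e != 0 ->
  pert_prod e 1 (tperm i0 i1) + pert_prod (- e) 1 (tperm i0 i1) < 2 * unif ^+ N.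
Proof.
move=> e_neq0; rewrite pert_prod_sym gtrDl !perm1 tpermL tpermR.
have -> : chi3 (i0, i0, i1) * chi3 (i1, i1, i0) = -1 by rewrite /chi3 /chi /=; ring.
rewrite mulrN1 mulNr oppr_lt0 (mulr_gt0 _ unif_rest_gt0) //.
by rewrite mulr_gt0 // exprn_even_gt0.
Qed.

Lemma Per_pert_sym_lt e : e != 0 ->
  Per (pert e) + Per (pert (- e)) < 2 * \sum_(s : {perm 'I_N}) \sum_(t : {perm 'I_N}) unif ^+ N.
Proof.
move=> e_neq0; rewrite !Per_perm -big_split mulr_sumr /=.
apply: (ltr_sum_ex (i := 1%g)) => [s |]; rewrite -big_split mulr_sumr /=.
  by apply: ler_sum => t _; apply: pert_prod_sym_le.
apply: (ltr_sum_ex (i := tperm i0 i1)) => [t |]; first exact: pert_prod_sym_le.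
exact: pert_prod_sym_lt.
Qed.

Lemma bound_sum :
  (N`!%:R / N%:R ^+ N) ^+ 2 = \sum_(s : {perm 'I_N}) \sum_(t : {perm 'I_N}) unif ^+ N.
Proof.
rewrite !sumr_const (card_Sn N) -mulrnA -[_ *+ (_ * _)]mulr_natr natrM /unif.
by rewrite expr_div_n exprVn -exprM mulnC exprM mulrC [N`!%:R ^+ 2]expr2.
Qed.

End Perturbation.

Theorem lemma3p2 (R : realFieldType) (n : nat) (hn : (2 < n)%N) :
  exists A : mat3 R n,
    Hull (@Lambda2 R n) A /\
    (Per A < (n`!%:R / n%:R ^+ n) ^+ 2 \/
     (Per A = (n`!%:R / n%:R ^+ n) ^+ 2 /\ A <> constmat n (n%:R ^+ 2)^-1)).
Proof.
case: n hn => [|[|[|m]]] // _.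
pose e : R := unif R m / 8.
have e_gt0 : 0 < e by rewrite divr_gt0 ?unif_gt0.
have hull_e : Hull (@Lambda2 R m.+3) (pert m e) by apply: hull_pert; rewrite gtr0_norm.
have hull_Ne : Hull (@Lambda2 R m.+3) (pert m (- e)) by apply: hull_pert; rewrite normrN gtr0_norm.
have := Per_pert_sym_lt m (lt0r_neq0 e_gt0); rewrite -bound_sum => Per_sum_lt.
have [Per_lt | Per_ge] := ltP (Per (pert m e)) (((m.+3)`!%:R / m.+3%:R ^+ m.+3) ^+ 2).
  by exists (pert m e); split; last left.
by exists (pert m (- e)); split; last (left; lra).
Qed.
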